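(* Consider the two-bus model described in the context, with fixed parameters $0<\alpha_1\le\alpha_2$, $B_1,B_2>0$, $\overline f_1,\overline f_2>0$. Let $\boldsymbol\omega=(\overline{\mathbf q},\mathbf d)$ and $\boldsymbol\omega'=(\overline{\mathbf q}',\mathbf d)$ be two instances with the same demand profile $\mathbf d=(d_1,d_2)$, $d_1+d_2>0$, with $\overline q_2'=\overline q_2$ and $\overline q_1'\le \overline q_1$, both feasible for \textsf{ED-2b} and \textsf{SCED-2b}. Then $\mathsf{PoS}(\boldsymbol\omega')\le \mathsf{PoS}(\boldsymbol\omega)$.
   Context: Two-bus network: buses $v_1,v_2$ joined by two parallel lines $e_1,e_2$ with susceptances $B_1,B_2>0$ and thermal limits $\overline f_1,\overline f_2>0$. Bus $i\in\{1,2\}$ has a generator with capacity $\overline q_i\ge 0$ and linear cost $\alpha_i q_i$, and a demand $d_i\ge 0$; throughout $0<\alpha_1\le\alpha_2$ (bus 1 is the cheap bus). An instance is $\boldsymbol\omega=(\overline{\mathbf q},\mathbf d)$ with $\overline{\mathbf q}=(\overline q_1,\overline q_2)$, $\mathbf d=(d_1,d_2)$. Define $f^{\mathsf{ed}}:=(B_1+B_2)\min\{\overline f_1/B_1,\overline f_2/B_2\}$ and $f^{\mathsf{sc}}:=\min\{\overline f_1,\overline f_2\}$ (note $f^{\mathsf{sc}}\le f^{\mathsf{ed}}$). The economic dispatch problem \textsf{ED-2b} is: minimize $\alpha_1q_1+\alpha_2q_2$ over $(q_1,q_2)$ subject to $0\le q_1\le\overline q_1$, $0\le q_2\le\overline q_2$,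 $q_1+q_2=d_1+d_2$, and $-f^{\mathsf{ed}}\le q_1-d_1\le f^{\mathsf{ed}}$ (equivalently, under the DC model, the flows $B_k(q_1-d_1)/(B_1+B_2)$ on line $e_k$ satisfy $|{\cdot}|\le\overline f_k$, $k=1,2$). The security-constrained problem \textsf{SCED-2b} is the same problem with the additional constraint $-f^{\mathsf{sc}}\le q_1-d_1\le f^{\mathsf{sc}}$ (the flow $q_1-d_1$ on the surviving line after the outage of either line must respect that line's limit). Let $c^\star_{\mathsf{ed}}(\boldsymbol\omega)$ and $c^\star_{\mathsf{sc}}(\boldsymbol\omega)$ be the optimal values of \textsf{ED-2b} and \textsf{SCED-2b} for an instance $\boldsymbol\omega$ feasible for both. The price of security of $\boldsymbol\omega$ is $\mathsf{PoS}(\boldsymbol\omega):=c^\star_{\mathsf{sc}}(\boldsymbol\omega)/c^\star_{\mathsf{ed}}(\boldsymbol\omega)$. *)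

From Stdlib Require Import Reals Lra.
Open Scope R_scope.

(* Effective transfer limits of the two-bus network. *)
Definition f_ed (B1 B2 fb1 fb2 : R) : R := (B1 + B2) * Rmin (fb1 / B1) (fb2 / B2).
Definition f_sc (fb1 fb2 : R) : R := Rmin fb1 fb2.

Definition cost (a1 a2 q1 q2 : R) : R := a1 * q1 + a2 * q2.

Definition ed_feasible (B1 B2 fb1 fb2 qb1 qb2 d1 d2 q1 q2 : R) : Prop :=
  0 <= q1 <= qb1 /\ 0 <= q2 <= qb2 /\ q1 + q2 = d1 + d2 /\
  - f_ed B1 B2 fb1 fb2 <= q1 - d1 <= f_ed B1 B2 fb1 fb2.

(* Feasible set of SCED-2b: ED-2b plus the N-1 security constraint. *)
Definition sc_feasible (B1 B2 fb1 fb2 qb1 qb2 d1 d2 q1 q2 : R) : Prop :=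
  ed_feasible B1 B2 fb1 fb2 qb1 qb2 d1 d2 q1 q2 /\
  - f_sc fb1 fb2 <= q1 - d1 <= f_sc fb1 fb2.

Definition is_opt_value (a1 a2 : R) (F : R -> R -> Prop) (c : R) : Prop :=
  (exists q1 q2, F q1 q2 /\ cost a1 a2 q1 q2 = c) /\
  (forall q1 q2, F q1 q2 -> c <= cost a1 a2 q1 q2).

Definition feasible (F : R -> R -> Prop) : Prop := exists q1 q2, F q1 q2.

(* Both optimal values have the closed form  a2 (d1 + d2) - (a2 - a1) m,  where m is the
   largest output the cheap generator can deliver: the minimum of its capacity, the total
   demand, and d1 plus the transfer limit of the problem.  With A = a2 (d1 + d2),
   e = a2 - a1, V = min (d1 + d2, d1 + f_sc) <= U = min (d1 + d2, d1 + f_ed), the price of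
   security of an instance with cheap capacity x is
   (A - e min (x, V)) / (A - e min (x, U)), which is nondecreasing in x. *)

From Stdlib Require Import Reals Lra.
Open Scope R_scope.

Lemma Rdiv_le_Rdiv_cross (a b c d : R) :
  0 < b -> 0 < d -> a * d <= c * b -> a / b <= c / d.
Proof.
  intros hb hd hcross.
  apply (Rmult_le_reg_r (b * d)); [nra |].
  replace (a / b * (b * d)) with (a * d) by (field; lra).
  replace (c / d * (b * d)) with (c * b) by (field; lra).
  exact hcross.
Qed.

Lemma f_sc_le_f_ed (B1 B2 fb1 fb2 : R) :
  0 < B1 -> 0 < B2 -> 0 < fb1 -> 0 < fb2 -> f_sc fb1 fb2 <= f_ed B1 B2 fb1 fb2.
Proof.
  intros hB1 hB2 hf1 hf2; unfold f_sc, f_ed.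
  pose proof (Rmin_l fb1 fb2); pose proof (Rmin_r fb1 fb2).
  assert (0 <= fb1 / B1) by (apply Rlt_le, Rdiv_lt_0_compat; lra).
  assert (0 <= fb2 / B2) by (apply Rlt_le, Rdiv_lt_0_compat; lra).
  destruct (Rle_dec (fb1 / B1) (fb2 / B2)) as [hle | hlt].
  - rewrite (Rmin_left _ _ hle).
    replace ((B1 + B2) * (fb1 / B1)) with (fb1 + B2 * (fb1 / B1)) by (field; lra).
    nra.
  - rewrite (Rmin_right (fb1 / B1) (fb2 / B2)) by lra.
    replace ((B1 + B2) * (fb2 / B2)) with (fb2 + B1 * (fb2 / B2)) by (field; lra).
    nra.
Qed.

(** Dispatch with cheap capacity [x], expensive capacity [y] and transfer limit [g]. *)
Definition dispatch_feasible (x y d1 d2 g q1 q2 : R) : Prop :=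
  0 <= q1 <= x /\ 0 <= q2 <= y /\ q1 + q2 = d1 + d2 /\ - g <= q1 - d1 <= g.

Definition max_cheap_output (x d1 d2 g : R) : R := Rmin x (Rmin (d1 + d2) (d1 + g)).

Lemma sc_feasible_iff (B1 B2 fb1 fb2 qb1 qb2 d1 d2 : R) :
  f_sc fb1 fb2 <= f_ed B1 B2 fb1 fb2 -> forall q1 q2,
  sc_feasible B1 B2 fb1 fb2 qb1 qb2 d1 d2 q1 q2 <->
  dispatch_feasible qb1 qb2 d1 d2 (f_sc fb1 fb2) q1 q2.
Proof.
  unfold sc_feasible, ed_feasible, dispatch_feasible; intros hle q1 q2; split; intros; lra.
Qed.

Lemma cost_balanced (a1 a2 q1 q2 D : R) :
  q1 + q2 = D -> cost a1 a2 q1 q2 = a2 * D - (a2 - a1) * q1.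
Proof. unfold cost; intros hD; subst D; ring. Qed.

Lemma cost_lower_bound (a1 a2 q1 q2 : R) :
  a1 <= a2 -> 0 <= q2 -> a1 * (q1 + q2) <= cost a1 a2 q1 q2.
Proof. unfold cost; intros; nra. Qed.

Section Dispatch.

Variables (x y d1 d2 g : R).

Lemma dispatch_le_max_cheap_output (q1 q2 : R) :
  dispatch_feasible x y d1 d2 g q1 q2 -> q1 <= max_cheap_output x d1 d2 g.
Proof.
  unfold dispatch_feasible, max_cheap_output; intros hq.
  apply Rmin_glb; [| apply Rmin_glb]; lra.
Qed.

(* The feasible point supplies the lower bounds: m >= q1 >= max (0, d1 - g) and
   d1 + d2 - m <= q2 <= y. *)
Lemma dispatch_feasible_max_cheap_output (q1 q2 : R) :
  dispatch_feasible x y d1 d2 g q1 q2 ->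
  dispatch_feasible x y d1 d2 g (max_cheap_output x d1 d2 g)
    (d1 + d2 - max_cheap_output x d1 d2 g).
Proof.
  intros hq.
  pose proof (dispatch_le_max_cheap_output q1 q2 hq) as hm.
  unfold dispatch_feasible, max_cheap_output in *.
  pose proof (Rmin_l x (Rmin (d1 + d2) (d1 + g))).
  pose proof (Rmin_l (d1 + d2) (d1 + g)); pose proof (Rmin_r (d1 + d2) (d1 + g)).
  pose proof (Rmin_r x (Rmin (d1 + d2) (d1 + g))).
  lra.
Qed.

Lemma dispatch_opt_value (a1 a2 c : R) (P : R -> R -> Prop) :
  a1 <= a2 ->
  (forall q1 q2, P q1 q2 <-> dispatch_feasible x y d1 d2 g q1 q2) ->
  is_opt_value a1 a2 P c ->
  c = a2 * (d1 + d2) - (a2 - a1) * max_cheap_output x d1 d2 g.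
Proof.
  intros ha hP [[r1 [r2 [hr <-]]] hlow].
  apply hP in hr.
  pose proof (dispatch_le_max_cheap_output r1 r2 hr) as hrm.
  pose proof (hlow _ _ (proj2 (hP _ _) (dispatch_feasible_max_cheap_output r1 r2 hr))) as hm.
  rewrite (cost_balanced a1 a2 r1 r2 (d1 + d2)) in * by apply hr.
  rewrite (cost_balanced a1 a2 _ _ (d1 + d2)) in hm by ring.
  nra.
Qed.

End Dispatch.

Lemma opt_value_pos (a1 a2 D c : R) (P : R -> R -> Prop) :
  0 < a1 -> a1 <= a2 -> 0 < D ->
  (forall q1 q2, P q1 q2 -> 0 <= q2 /\ q1 + q2 = D) ->
  is_opt_value a1 a2 P c -> 0 < c.
Proof.
  intros ha1 ha12 hD hP [[q1 [q2 [hq <-]]] _].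
  destruct (hP q1 q2 hq) as [hq2 hsum].
  pose proof (cost_lower_bound a1 a2 q1 q2 ha12 hq2); nra.
Qed.

(* Case x' <= V: the secure and unconstrained cheap outputs of the smaller instance
   coincide; case V <= x': the secure cheap outputs of both instances equal V. *)
Lemma Rmin_ratio_nondecreasing (A e V U x' x : R) :
  0 <= e -> V <= U -> x' <= x ->
  0 < A - e * Rmin x' U -> 0 < A - e * Rmin x U ->
  (A - e * Rmin x' V) / (A - e * Rmin x' U) <= (A - e * Rmin x V) / (A - e * Rmin x U).
Proof.
  intros he hVU hx hden' hden.
  apply Rdiv_le_Rdiv_cross; [exact hden' | exact hden |].
  assert (hVU_x : Rmin x V <= Rmin x U) by now apply Rle_min_compat_l.
  assert (hU : Rmin x' U <= Rmin x U) by now apply Rle_min_compat_r.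
  destruct (Rle_dec x' V) as [hx'V | hVx'].
  - rewrite (Rmin_left x' V), (Rmin_left x' U) in * by lra.
    assert (0 <= (A - e * x') * (e * (Rmin x U - Rmin x V))).
    { apply Rmult_le_pos; [lra | apply Rmult_le_pos; lra]. }
    nra.
  - rewrite (Rmin_right x' V), (Rmin_right x V) by lra.
    assert (V <= Rmin x' U) by (apply Rmin_glb; lra).
    assert (0 <= (A - e * V) * (e * (Rmin x U - Rmin x' U))).
    { apply Rmult_le_pos; [nra | apply Rmult_le_pos; lra]. }
    nra.
Qed.

Theorem lemma1 (a1 a2 B1 B2 fb1 fb2 : R)
  (ha1 : 0 < a1) (ha12 : a1 <= a2) (hB1 : 0 < B1) (hB2 : 0 < B2)
  (hf1 : 0 < fb1) (hf2 : 0 < fb2)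
  (qb1 qb2 qb1' d1 d2 : R)
  (hqb1 : 0 <= qb1) (hqb2 : 0 <= qb2) (hqb1' : 0 <= qb1')
  (hd1 : 0 <= d1) (hd2 : 0 <= d2) (hd : 0 < d1 + d2)
  (hq1' : qb1' <= qb1)
  (hfe : feasible (ed_feasible B1 B2 fb1 fb2 qb1 qb2 d1 d2))
  (hfs : feasible (sc_feasible B1 B2 fb1 fb2 qb1 qb2 d1 d2))
  (hfe' : feasible (ed_feasible B1 B2 fb1 fb2 qb1' qb2 d1 d2))
  (hfs' : feasible (sc_feasible B1 B2 fb1 fb2 qb1' qb2 d1 d2))
  (ced csc ced' csc' : R)
  (Hced : is_opt_value a1 a2 (ed_feasible B1 B2 fb1 fb2 qb1 qb2 d1 d2) ced)
  (Hcsc : is_opt_value a1 a2 (sc_feasible B1 B2 fb1 fb2 qb1 qb2 d1 d2) csc)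
  (Hced' : is_opt_value a1 a2 (ed_feasible B1 B2 fb1 fb2 qb1' qb2 d1 d2) ced')
  (Hcsc' : is_opt_value a1 a2 (sc_feasible B1 B2 fb1 fb2 qb1' qb2 d1 d2) csc') :
  csc' / ced' <= csc / ced.
Proof.
  pose proof (f_sc_le_f_ed B1 B2 fb1 fb2 hB1 hB2 hf1 hf2) as hlim.
  assert (hed : forall x q1 q2, ed_feasible B1 B2 fb1 fb2 x qb2 d1 d2 q1 q2 <->
            dispatch_feasible x qb2 d1 d2 (f_ed B1 B2 fb1 fb2) q1 q2) by easy.
  assert (hsc := fun x => sc_feasible_iff B1 B2 fb1 fb2 x qb2 d1 d2 hlim).
  assert (hbalance : forall x q1 q2, ed_feasible B1 B2 fb1 fb2 x qb2 d1 d2 q1 q2 ->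
            0 <= q2 /\ q1 + q2 = d1 + d2) by (unfold ed_feasible; intros; lra).
  pose proof (opt_value_pos _ _ _ _ _ ha1 ha12 hd (hbalance qb1) Hced).
  pose proof (opt_value_pos _ _ _ _ _ ha1 ha12 hd (hbalance qb1') Hced').
  rewrite (dispatch_opt_value qb1 qb2 d1 d2 _ a1 a2 ced _ ha12 (hed qb1) Hced) in *.
  rewrite (dispatch_opt_value qb1' qb2 d1 d2 _ a1 a2 ced' _ ha12 (hed qb1') Hced') in *.
  rewrite (dispatch_opt_value qb1 qb2 d1 d2 _ a1 a2 csc _ ha12 (hsc qb1) Hcsc).
  rewrite (dispatch_opt_value qb1' qb2 d1 d2 _ a1 a2 csc' _ ha12 (hsc qb1') Hcsc').
  unfold max_cheap_output in *.
  apply Rmin_ratio_nondecreasing; try assumption; [lra |].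
  apply Rle_min_compat_l; lra.
Qed.
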